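(* Let $G=(V,E)$ be a connected bipartite graph with at least two edges and with vertex bipartition $V=X\cup Y$ (i.e. $X,Y$ independent sets partitioning $V$), and suppose $G$ is not a star $K_{1,m}$ whose center lies in $Y$. Then $G$ has a subgraph $H$ such that every vertex $y\in Y$ satisfies $d_H(y)\ge 1$, and every connected component of $H$ is either a star $K_{1,m}$ with $m\ge2$ whose center lies in $X$, or a subdivided star obtained from $K_{1,m}$ with $m\ge 2$ by subdividing each edge exactly once, whose center (the vertex of degree $m$) lies in $Y$.
   Context: A star $K_{1,m}$ has center its vertex of degree $m$. A subdivided star arises from a star by replacing every edge with a path of length $2$; its center is the center of the original star. *)

(* Simple graphs as symmetric irreflexive relations on a finType. *)
From mathcomp Require Import all_boot.
Set Implicit Arguments. Unset Strict Implicit. Unset Printing Implicit Defensive.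

Section Graphs.
Variable T : finType.

Definition connected_graph (e : rel T) : Prop := forall x y : T, connect e x y.

Definition bipartition (e : rel T) (X Y : {set T}) : Prop :=
  [/\ X :&: Y = set0, X :|: Y = setT,
      (forall x y, x \in X -> y \in X -> ~~ e x y) &
      (forall x y, x \in Y -> y \in Y -> ~~ e x y)].

Definition at_least_two_edges (e : rel T) : Prop :=
  exists a b c d : T, [/\ e a b, e c d & [set a; b] != [set c; d]].

Definition graph_is_star_centered (e : rel T) (c : T) : Prop :=
  forall x y : T, e x y = ((x == c) != (y == c)).

Definition subgraph (e : rel T) (S : {set T}) (h : rel T) : Prop :=
  [/\ symmetric h,
      (forall x y, h x y -> e x y) &
      (forall x y, h x y -> x \in S /\ y \in S)].

Definition component (h : rel T) (x : T) : {set T} := [set y | connect h x y].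

Definition comp_is_star (h : rel T) (C : {set T}) (c : T) : Prop :=
  exists m (f : 'I_m -> T),
    [/\ 2 <= m, injective f, c \notin codom f,
        C = c |: [set f i | i : 'I_m] &
        forall x y, x \in C -> y \in C ->
          (h x y <-> exists i, (x = c /\ y = f i) \/ (x = f i /\ y = c))].

(* H restricted to C is a subdivided star (K_{1,m}, m >= 2, each edge
   subdivided once) with center c: edges c - a i and a i - b i *)
Definition comp_is_subdivided_star (h : rel T) (C : {set T}) (c : T) : Prop :=
  exists m (a b : 'I_m -> T),
    2 <= m /\ injective a /\ injective b /\
    c \notin codom a /\ c \notin codom b /\
    [disjoint codom a & codom b] /\
    C = c |: ([set a i | i : 'I_m] :|: [set b i | i : 'I_m]) /\
    (forall x y, x \in C -> y \in C ->
       (h x y <-> exists i,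
          (x = c /\ y = a i) \/ (x = a i /\ y = c) \/
          (x = a i /\ y = b i) \/ (x = b i /\ y = a i))).

End Graphs.

From mathcomp Require Import all_boot zify.
Set Implicit Arguments. Unset Strict Implicit. Unset Printing Implicit Defensive.

(* For every y in Y choose a neighbour f y, maximising first the number of y
   such that f y has a second neighbour in Y, then the number of y whose class
   f^-1 (f y) is not a singleton.  As G is connected and not a star centred in
   Y, every y has another vertex of Y at distance two, and exchange arguments
   against optimality show: every f y has a second Y-neighbour; if y is alone
   in its class, every other Y-neighbour z of f y lies in a class {z, p} of
   size exactly two; and no two lonely vertices attach to both z and p.
   The non-singleton classes without an attachment point then form stars
   centred at f y in X, and each attachment point z carries the subdivided
   star made of z - f z - p and of z - f y - y for the lonely y attached to z. *)

Lemma imset_enum_val (T : finType) (A : {set T}) :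
  [set enum_val i | i : 'I_#|A|] = A.
Proof.
apply/setP=> v; apply/imsetP/idP => [[i _ ->]|Av]; first exact: enum_valP.
by exists (enum_rank_in Av v); rewrite ?enum_rankK_in.
Qed.

Section DepthTwoForest.
Variables (T : finType) (par : T -> option T).
Hypothesis par_depth : forall u v w, par u = Some v -> par v = Some w -> par w = None.

Definition parent_rel : rel T := fun u v => (par u == Some v) || (par v == Some u).

Definition proot v :=
  if par v is Some w then (if par w is Some w' then w' else w) else v.

Lemma parent_rel_sym : symmetric parent_rel.
Proof. by move=> u v; rewrite /parent_rel orbC. Qed.

Lemma proot_par u v : par u = Some v -> proot u = proot v.
Proof.
by move=> uv; rewrite /proot uv; case vw: (par v) => [w|] //; rewrite (par_depth uv vw).
Qed.

Lemma proot_None u : par (proot u) = None.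
Proof.
rewrite /proot; case uv: (par u) => [v|] //.
by case vw: (par v) => [w|] //; apply: par_depth uv vw.
Qed.

Lemma connect_proot u : connect parent_rel u (proot u).
Proof.
rewrite /proot; case uv: (par u) => [v|] //.
have huv : parent_rel u v by rewrite /parent_rel uv eqxx.
case vw: (par v) => [w|]; last exact: connect1.
by apply: connect_trans (connect1 huv) (connect1 _); rewrite /parent_rel vw eqxx.
Qed.

Lemma connect_parentE u v : connect parent_rel u v = (proot u == proot v).
Proof.
apply/idP/eqP => [/connectP[p]|uv].
  elim: p u => [|w p IHp] u /=; first by move=> _ ->.
  by case/andP=> /orP[]/eqP/proot_par uw /IHp; rewrite uw.
apply: connect_trans (connect_proot u) _; rewrite uv.
by rewrite (sym_connect_sym parent_rel_sym) connect_proot.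
Qed.

Lemma proot_eqE v r : par r = None ->
  (proot v == r) =
  [|| v == r, par v == Some r | [exists w, (par w == Some r) && (par v == Some w)]].
Proof.
move=> r0; rewrite /proot; case vw: (par v) => [w|] /=; last first.
  by case: existsP => [[w /andP[_ /eqP]]|]; rewrite ?orbF.
have -> : (v == r) = false by apply/eqP=> vr; rewrite vr r0 in vw.
case wr: (par w) => [w'|] /=.
  have -> : (Some w == Some r) = false by apply/eqP=> -[wr']; rewrite wr' r0 in wr.
  apply/eqP/existsP => [<-|[w0 /andP[/eqP w0r /eqP[w0w]]]].
    by exists w; rewrite wr !eqxx.
  by rewrite -w0w wr in w0r; case: w0r.
case: existsP => [[w0 /andP[/eqP w0r /eqP[w0w]]]|_]; last by rewrite orbF.
by rewrite -w0w wr in w0r.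
Qed.

Lemma component_proot u : component parent_rel u =
  proot u |: ([set v | par v == Some (proot u)] :|:
              [set v | [exists w, (par w == Some (proot u)) && (par v == Some w)]]).
Proof. by apply/setP=> v; rewrite !inE connect_parentE eq_sym proot_eqE ?proot_None. Qed.

Lemma comp_is_star_proot u :
  (forall v w, par v = Some w -> par w != Some (proot u)) ->
  1 < #|[set v | par v == Some (proot u)]| ->
  comp_is_star parent_rel (component parent_rel u) (proot u).
Proof.
set r := proot u; set A := [set v | par v == Some r] => no_grandchild A_gt1.
have r0 : par r = None by apply: proot_None.
have CE : component parent_rel u = r |: A.
  rewrite component_proot; congr (_ |: _); apply/setP => v; rewrite !inE.
  case: existsP => [[w /andP[/eqP wr /eqP vw]]|]; last by rewrite orbF.
  by have := no_grandchild _ _ vw; rewrite wr eqxx.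
have childP x y : (x == r) || (par x == Some r) -> par x == Some y ->
    exists i : 'I_#|A|, x = enum_val i /\ y = r.
  case/orP=> [/eqP->|/eqP xr]; first by rewrite r0.
  rewrite xr => /eqP[<-]; have xA : x \in A by rewrite inE xr.
  by exists (enum_rank_in xA x); rewrite enum_rankK_in.
exists #|A|, (@enum_val _ (pred_of_set A)); split => //.
- exact: enum_val_inj.
- by apply/codomP => -[i ri]; have := enum_valP i; rewrite inE -ri r0.
- by rewrite CE imset_enum_val.
move=> x y; rewrite CE !inE => Cx Cy; split.
  case/orP=> [/(childP _ _ Cx)|/(childP _ _ Cy)] [i [-> ->]]; exists i; tauto.
by case=> i [[-> ->]|[-> ->]]; have := enum_valP i; rewrite /parent_rel inE => ->; rewrite ?orbT.
Qed.

Lemma comp_is_subdivided_star_proot u (child : T -> T) :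
  (forall x, par x = Some (proot u) -> par (child x) = Some x) ->
  (forall v x, par x = Some (proot u) -> par v = Some x -> v = child x) ->
  1 < #|[set v | par v == Some (proot u)]| ->
  comp_is_subdivided_star parent_rel (component parent_rel u) (proot u).
Proof.
set r := proot u; set A := [set v | par v == Some r] => childP child_uniq A_gt1.
have r0 : par r = None by apply: proot_None.
set a := @enum_val _ (pred_of_set A); set b := fun i => child (a i).
have aP i : par (a i) = Some r by have := enum_valP i; rewrite inE => /eqP.
have bP i : par (b i) = Some (a i) by apply: childP.
have aE x : par x = Some r -> exists i, x = a i.
  move=> xr; have xA : x \in A by rewrite inE xr.
  by exists (enum_rank_in xA x); rewrite /a enum_rankK_in.
have CE : component parent_rel u = r |: ([set a i | i : 'I_#|A|] :|: [set b i | i : 'I_#|A|]).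
  rewrite component_proot /a imset_enum_val; congr (_ |: (_ :|: _)).
  apply/setP => v; rewrite !inE; apply/existsP/imsetP => [[w /andP[/eqP wr /eqP vw]]|[i _ ->]].
    by have [i wi] := aE _ wr; exists i; rewrite // /b -wi (child_uniq _ _ wr vw).
  by exists (a i); rewrite aP bP !eqxx.
have parC x y : x \in component parent_rel u -> par x = Some y ->
    exists i, (x = a i /\ y = r) \/ (x = b i /\ y = a i).
  rewrite component_proot !inE => /or3P[/eqP->|/eqP xr|]; first by rewrite r0.
    by rewrite xr => -[<-]; have [i ->] := aE _ xr; exists i; left.
  case/existsP=> w /andP[/eqP wr /eqP xw]; rewrite xw => -[<-].
  by have [i wi] := aE _ wr; exists i; right; rewrite /b -wi (child_uniq _ _ wr xw).
have a_inj : injective a by apply: enum_val_inj.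
have b_inj : injective b.
  by move=> i j bij; have := bP i; rewrite bij bP => -[/enum_val_inj].
have r_notin_a : r \notin codom a by apply/codomP => -[i ri]; have := aP i; rewrite -ri r0.
have r_notin_b : r \notin codom b by apply/codomP => -[i ri]; have := bP i; rewrite -ri r0.
have ab_disj : [disjoint codom a & codom b].
  rewrite disjoint_subset; apply/subsetP => _ /codomP[i ->]; rewrite !inE.
  by apply/codomP => -[j bj]; have := bP j; rewrite -bj aP => -[aj]; have := aP j; rewrite -aj r0.
exists #|A|, a, b; do 7 split=> //.
move=> x y Cx Cy; split.
  by case/orP=> [/eqP/(parC _ _ Cx)|/eqP/(parC _ _ Cy)] [i [[-> ->]|[-> ->]]]; exists i; tauto.
by case=> i [[-> ->]|[[-> ->]|[[-> ->]|[-> ->]]]]; rewrite /parent_rel ?aP ?bP ?eqxx ?orbT.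
Qed.

End DepthTwoForest.

Section Bipartite.
Variables (T : finType) (e : rel T) (X Y : {set T}).
Hypothesis e_sym : symmetric e.
Hypothesis e_irr : irreflexive e.
Hypothesis e_conn : connected_graph e.
Hypothesis e_bip : bipartition e X Y.
Hypothesis not_Ystar : ~ (exists c, c \in Y /\ graph_is_star_centered e c).

Lemma notin_Y_in_X v : v \notin Y -> v \in X.
Proof. by case: e_bip => _ XUY _ _ vY; have := in_setT v; rewrite -XUY inE (negbTE vY) orbF. Qed.

Lemma adj_Y_notin_Y y v : y \in Y -> e y v -> v \notin Y.
Proof. by case: e_bip => _ _ _ indY yY yv; apply: contraL yv => /(indY _ _ yY). Qed.

Lemma adj_notin_Y_in_Y v w : v \notin Y -> e v w -> w \in Y.
Proof.
case: e_bip => _ _ indX _ /notin_Y_in_X vX vw; apply: contraLR vw => /notin_Y_in_X.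
exact: indX.
Qed.

Lemma exists_Y_at_distance2 y : y \in Y ->
  exists x y', [/\ e y x, e x y', y' \in Y & y' != y].
Proof.
move=> yY; case: (boolP [exists x, exists y', [&& e y x, e x y', y' \in Y & y' != y]]).
  by case/existsP=> x /existsP[y' /and4P[]]; exists x, y'.
move=> none2; exfalso; apply: not_Ystar; exists y; split=> //.
have Y_only_y x y' : e y x -> e x y' -> y' \in Y -> y' = y.
  move=> yx xy' y'Y; apply/eqP/negPn/negP=> y'y; move/negP: none2; apply.
  by apply/existsP; exists x; apply/existsP; exists y'; rewrite yx xy' y'Y y'y.
have ball1 b : connect e y b -> (b == y) || e y b.
  case/connectP=> p; elim/last_ind: p b => [|p c IHp] b /=; first by move=> _ ->; rewrite eqxx.
  rewrite rcons_path last_rcons => /andP[yp pc] ->.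
  case/orP: (IHp _ yp erefl) => [/eqP lp|ylp]; first by rewrite lp in pc; rewrite pc orbT.
  by rewrite (Y_only_y _ _ ylp pc) ?eqxx // (adj_notin_Y_in_Y (adj_Y_notin_Y yY ylp) pc).
move=> a b; case: (eqVneq a y) => [->|ay]; case: (eqVneq b y) => [->|by_] /=.
- by rewrite e_irr.
- by case/orP: (ball1 b (e_conn y b)) => [/eqP bE|->]; first by rewrite bE eqxx in by_.
- by case/orP: (ball1 a (e_conn y a)) => [/eqP aE|ya]; [rewrite aE eqxx in ay | rewrite e_sym].
case/orP: (ball1 a (e_conn y a)) => [/eqP aE|ya]; first by rewrite aE eqxx in ay.
case/orP: (ball1 b (e_conn y b)) => [/eqP bE|yb]; first by rewrite bE eqxx in by_.
case: e_bip => _ _ indX _; apply/negbTE/indX; apply: notin_Y_in_X.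
  exact: adj_Y_notin_Y ya.
exact: adj_Y_notin_Y yb.
Qed.

Definition neighbour_choice (f : {ffun T -> T}) := [forall y in Y, e y (f y)].

Lemma neighbour_choiceP (f : {ffun T -> T}) :
  reflect (forall y, y \in Y -> e y (f y)) (neighbour_choice f).
Proof. exact: forall_inP. Qed.

Definition branching (f : {ffun T -> T}) :=
  [set y in Y | [exists y', [&& y' \in Y, y' != y & e (f y) y']]].

Definition shared (f : {ffun T -> T}) :=
  [set y in Y | [exists y', [&& y' \in Y, y' != y & f y' == f y]]].

(* Lexicographic order on (#|branching f|, #|shared f|). *)
Definition weight (f : {ffun T -> T}) := #|T|.+1 * #|branching f| + #|shared f|.

Lemma weight_lt_shared (f g : {ffun T -> T}) :
  branching f \subset branching g -> shared f \proper shared g -> weight f < weight g.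
Proof. by move=> /subset_leq_card Bfg /proper_card Sfg; rewrite /weight; nia. Qed.

Lemma weight_lt_branching (f g : {ffun T -> T}) :
  branching f \proper branching g -> weight f < weight g.
Proof. by move=> /proper_card Bfg; have := max_card (shared f); rewrite /weight; nia. Qed.

Lemma branching_sub (f g : {ffun T -> T}) :
  (forall w, w \in Y -> f w != g w -> w \in branching g) ->
  branching f \subset branching g.
Proof.
move=> changed; apply/subsetP=> w; rewrite inE => /andP[wY Bw].
by case: (eqVneq (f w) (g w)) => [fgw|/(changed _ wY)]; rewrite // inE wY -fgw.
Qed.

Lemma mem_shared (f : {ffun T -> T}) y q :
  y \in Y -> q \in Y -> q != y -> f q = f y -> y \in shared f.
Proof. by move=> yY qY qy fqy; rewrite inE yY; apply/existsP; exists q; rewrite qY qy fqy eqxx. Qed.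

Lemma sharedP (f : {ffun T -> T}) y :
  y \in shared f -> y \in Y /\ exists q, [/\ q \in Y, q != y & f q = f y].
Proof. by rewrite inE => /andP[yY /existsP[q /and3P[qY qy /eqP fqy]]]; split=> //; exists q. Qed.

Lemma branchingP (f : {ffun T -> T}) y :
  y \in branching f -> exists q, [/\ q \in Y, q != y & e (f y) q].
Proof. by rewrite inE => /andP[_ /existsP[q /and3P[qY qy fyq]]]; exists q. Qed.

Lemma exists_optimal_choice : exists2 f, neighbour_choice f &
  forall g, neighbour_choice g -> weight g <= weight f.
Proof.
pose f0 : {ffun T -> T} := [ffun v => odflt v [pick x | e v x]].
have f0_choice : neighbour_choice f0.
  apply/neighbour_choiceP=> y yY; rewrite ffunE; case: pickP => // none.
  by have [x [y' [yx _ _ _]]] := exists_Y_at_distance2 yY; rewrite none in yx.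
by case: (arg_maxnP weight f0_choice) => f; exists f.
Qed.

Definition retarget (f : {ffun T -> T}) (y x : T) : {ffun T -> T} :=
  [ffun v => if v == y then x else f v].

Lemma retarget_eq f y x : retarget f y x y = x.
Proof. by rewrite ffunE eqxx. Qed.

Lemma retarget_neq f y x v : v != y -> retarget f y x v = f v.
Proof. by rewrite ffunE => /negbTE->. Qed.

Section Optimal.
Variable f : {ffun T -> T}.
Hypothesis f_choice : forall y, y \in Y -> e y (f y).
Hypothesis f_opt : forall g, neighbour_choice g -> weight g <= weight f.

Lemma no_better_choice g : neighbour_choice g -> weight f < weight g -> False.
Proof. by move=> /f_opt gf /leq_trans/(_ gf); rewrite ltnn. Qed.

Lemma branching_optimal y : y \in Y -> y \in branching f.
Proof.
move=> yY; apply/negPn/negP=> yB.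
have [x [y' [yx xy' y'Y y'y]]] := exists_Y_at_distance2 yY.
pose g := retarget (retarget f y x) y' x.
have gy : g y = x by rewrite retarget_neq 1?eq_sym // retarget_eq.
have gy' : g y' = x by rewrite retarget_eq.
have gw w : w != y -> w != y' -> g w = f w by move=> wy wy'; rewrite !retarget_neq.
have yBg : y \in branching g by rewrite inE yY /=; apply/existsP; exists y'; rewrite y'Y y'y gy.
apply: (@no_better_choice g).
  apply/neighbour_choiceP=> w wY; have [->|wy] := eqVneq w y; first by rewrite gy.
  by have [->|wy'] := eqVneq w y'; [rewrite gy' e_sym | rewrite gw ?f_choice].
apply/weight_lt_branching/properP; split; last by exists y.
apply: branching_sub => w wY; have [-> //|wy] := eqVneq w y.
have [->|wy'] := eqVneq w y'; last by rewrite gw ?eqxx.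
by rewrite inE y'Y => _; apply/existsP; exists y; rewrite yY eq_sym y'y gy' e_sym yx.
Qed.

Section Lonely.
Variables y y' : T.
Hypotheses (yY : y \in Y) (y_lonely : y \notin shared f).
Hypotheses (y'Y : y' \in Y) (y'y : y' != y) (fyy' : e (f y) y').

(* Moving y' into the singleton class of y keeps every branching vertex
   branching and makes y shared. *)
Let g := retarget f y' (f y).

Let g_choice : neighbour_choice g.
Proof.
apply/neighbour_choiceP=> w wY; have [->|wy'] := eqVneq w y'.
  by rewrite retarget_eq e_sym.
by rewrite retarget_neq ?f_choice.
Qed.

Let g_branching : branching f \subset branching g.
Proof.
apply: branching_sub => w wY; have [->|wy'] := eqVneq w y'; last by rewrite retarget_neq ?eqxx.
by rewrite inE y'Y => _; apply/existsP; exists y; rewrite yY eq_sym y'y retarget_eq e_sym f_choice.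
Qed.

Let y_shared_g : y \in shared g.
Proof. by apply: (mem_shared yY y'Y y'y); rewrite retarget_eq retarget_neq // eq_sym. Qed.

Lemma lonely_attach_shared : y' \in shared f.
Proof.
apply/negPn/negP=> y'_lonely; apply: (no_better_choice g_choice).
apply: weight_lt_shared g_branching _; apply/properP; split; last by exists y.
apply/subsetP=> w /sharedP[wY [q [qY qw fqw]]].
have wy' : w != y' by apply: contraNneq y'_lonely => <-; apply: mem_shared fqw.
have qy' : q != y'.
  by apply: contraNneq y'_lonely => <-; apply: (mem_shared qY wY _ (esym fqw)); rewrite eq_sym.
by apply: (mem_shared wY qY qw); rewrite !retarget_neq.
Qed.

Lemma lonely_attach_partner_uniq u v : u \in Y -> v \in Y -> u != y' -> v != y' ->
  f u = f y' -> f v = f y' -> u = v.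
Proof.
move=> uY vY uy' vy' fuy' fvy'; apply/eqP/negPn/negP=> uv.
apply: (no_better_choice g_choice).
apply: weight_lt_shared g_branching _; apply/properP; split; last by exists y.
apply/subsetP=> w /sharedP[wY [q [qY qw fqw]]].
have [->|wy'] := eqVneq w y'.
  by apply: (mem_shared y'Y yY); rewrite 1?eq_sym // retarget_eq retarget_neq // eq_sym.
have [qy'|qy'] := eqVneq q y'; last by apply: (mem_shared wY qY qw); rewrite !retarget_neq.
rewrite qy' in fqw; have [wu|wu] := eqVneq w u.
  by apply: (mem_shared wY vY); rewrite ?wu 1?eq_sym // !retarget_neq // fvy' fqw wu.
by apply: (mem_shared wY uY); rewrite 1?eq_sym // !retarget_neq // fuy' fqw.
Qed.

End Lonely.

(* Two lonely vertices never attach to both members of a class {z, p}: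
   otherwise moving z to f y1 and p to f y2 shares y1 and y2 and loses nothing. *)
Lemma lonely_attach_not_partners y1 y2 z p :
  y1 \in Y -> y1 \notin shared f -> y2 \in Y -> y2 \notin shared f ->
  z \in Y -> z != y1 -> e (f y1) z -> p \in Y -> p != z -> f p = f z ->
  p != y2 -> e (f y2) p -> False.
Proof.
move=> y1Y y1_lonely y2Y y2_lonely zY zy1 fy1z pY pz fpz py2 fy2p.
have z_shared := lonely_attach_shared y1Y y1_lonely zY zy1 fy1z.
have y1z : y1 != z by apply: contraNneq y1_lonely => ->.
have p_shared : p \in shared f by apply: (mem_shared pY zY _ (esym fpz)); rewrite eq_sym.
have y1p : y1 != p by apply: contraNneq y1_lonely => ->.
have y2p : y2 != p by apply: contraNneq y2_lonely => ->.
have y2z : y2 != z by apply: contraNneq y2_lonely => ->.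
pose g := retarget (retarget f z (f y1)) p (f y2).
have gz : g z = f y1 by rewrite retarget_neq 1?eq_sym // retarget_eq.
have gp : g p = f y2 by rewrite retarget_eq.
have gw w : w != z -> w != p -> g w = f w by move=> wz wp; rewrite !retarget_neq.
apply: (@no_better_choice g).
  apply/neighbour_choiceP=> w wY; have [->|wz] := eqVneq w z; first by rewrite gz e_sym.
  by have [->|wp] := eqVneq w p; [rewrite gp e_sym | rewrite gw ?f_choice].
apply: weight_lt_shared.
  apply: branching_sub => w wY; have [->|wz] := eqVneq w z.
    by rewrite inE zY => _; apply/existsP; exists y1; rewrite y1Y y1z gz e_sym f_choice.
  have [->|wp] := eqVneq w p; last by rewrite gw ?eqxx.
  by rewrite inE pY => _; apply/existsP; exists y2; rewrite y2Y y2p gp e_sym f_choice.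
apply/properP; split; last by exists y1 => //; apply: (mem_shared y1Y zY zy1); rewrite gz gw.
apply/subsetP=> w /sharedP[wY [q [qY qw fqw]]].
have [->|wz] := eqVneq w z; first by apply: (mem_shared zY y1Y y1z); rewrite gz gw.
have [->|wp] := eqVneq w p; first by apply: (mem_shared pY y2Y y2p); rewrite gp gw.
have fwz : f w != f z.
  apply: contra_neq wp => fwz.
  exact: lonely_attach_partner_uniq y1Y y1_lonely zY zy1 fy1z _ _ wY pY wz pz fwz fpz.
have qz : q != z by apply: contra_neq fwz => qz; rewrite -fqw qz.
have qp : q != p by apply: contra_neq fwz => qp; rewrite -fqw qp fpz.
by apply: (mem_shared wY qY qw); rewrite !gw.
Qed.

Definition lonely y := (y \in Y) && (y \notin shared f).

Definition attach y := odflt y [pick y' in Y | (y' != y) && e (f y) y'].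

Lemma attachP y : y \in Y -> [/\ attach y \in Y, attach y != y & e (f y) (attach y)].
Proof.
move=> yY; rewrite /attach; case: pickP => [y' /andP[-> /andP[-> ->]] //|none].
have [q [qY qy fyq]] := branchingP (branching_optimal yY).
by have := none q; rewrite qY qy fyq.
Qed.

Definition hubs := [set z in Y | [exists y, lonely y && (attach y == z)]].

Lemma hubP z : z \in hubs ->
  z \in Y /\ exists y, [/\ y \in Y, y \notin shared f & attach y = z].
Proof.
by rewrite inE => /andP[zY /existsP[y /andP[/andP[yY y_lonely] /eqP yz]]]; split=> //; exists y.
Qed.

Lemma hub_Y z : z \in hubs -> z \in Y.
Proof. by case/hubP. Qed.

Lemma hub_shared z : z \in hubs -> z \in shared f.
Proof.
case/hubP=> zY [y [yY y_lonely <-]]; have [ay_Y ay_y fy_ay] := attachP yY.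
exact: lonely_attach_shared fy_ay.
Qed.

Lemma attach_hub y : y \in Y -> y \notin shared f -> attach y \in hubs.
Proof.
move=> yY y_lonely; rewrite inE; have [-> _ _] := attachP yY.
by apply/existsP; exists y; rewrite /lonely yY y_lonely eqxx.
Qed.

Lemma choice_notin_Y y : y \in Y -> f y \notin Y.
Proof. by move=> yY; apply: adj_Y_notin_Y yY (f_choice yY). Qed.

Lemma lonely_choice_inj y1 y2 :
  y1 \in Y -> y1 \notin shared f -> y2 \in Y -> f y2 = f y1 -> y2 = y1.
Proof.
move=> y1Y y1_lonely y2Y fy21; apply/eqP/negPn/negP=> y21.
by move/negP: y1_lonely; apply; apply: mem_shared fy21.
Qed.

Lemma hub_partner_not_hub z p :
  z \in hubs -> p \in Y -> p != z -> f p = f z -> p \notin hubs.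
Proof.
move=> z_hub pY pz fpz; apply/negP=> p_hub.
have [zY [y1 [y1Y y1_lonely att1]]] := hubP z_hub.
have [_ [y2 [y2Y y2_lonely att2]]] := hubP p_hub.
have [_ zy1 fy1z] := attachP y1Y; have [_ py2 fy2p] := attachP y2Y.
rewrite att1 in zy1 fy1z; rewrite att2 in py2 fy2p.
exact: (lonely_attach_not_partners y1Y y1_lonely y2Y y2_lonely zY zy1 fy1z pY pz fpz py2 fy2p).
Qed.

Lemma hub_partner_uniq z p q : z \in hubs -> p \in Y -> q \in Y -> p != z -> q != z ->
  f p = f z -> f q = f z -> p = q.
Proof.
move=> z_hub pY qY pz qz fpz fqz; have [zY [y [yY y_lonely att]]] := hubP z_hub.
have [_ zy fyz] := attachP yY; rewrite att in zy fyz.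
exact: (lonely_attach_partner_uniq yY y_lonely zY zy fyz pY qY pz qz fpz fqz).
Qed.

(* The subgraph H as a forest of depth two.  Hubs are the roots of the
   subdivided stars: below a hub z hang f z (with the partner of z under it)
   and f y (with y under it) for every lonely y attached to z.  Every other
   vertex y of Y hangs below f y, the root of a star. *)
Definition parent v : option T :=
  if v \in Y then (if v \in hubs then None else Some (f v))
  else if [pick y | lonely y && (f y == v)] is Some y then Some (attach y)
  else if [pick z in hubs | f z == v] is Some z then Some z else None.

Lemma parent_Y v : v \in Y -> parent v = if v \in hubs then None else Some (f v).
Proof. by rewrite /parent => ->. Qed.

Lemma parent_notin_Y v w : v \notin Y -> parent v = Some w -> w \in hubs /\
  exists y, [/\ y \in Y, f y = v &
             (y \notin shared f /\ w = attach y) \/ (y \in hubs /\ w = y)].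
Proof.
rewrite /parent => /negbTE->.
case: pickP => [y /andP[/andP[yY y_lonely] /eqP fyv] [<-]|_].
  by split; [apply: attach_hub | exists y; split=> //; left].
case: pickP => [z /andP[z_hub /eqP fzv] [<-]|_] //.
by split=> //; exists z; split=> //; [apply: hub_Y | right].
Qed.

Lemma parent_depth u v w : parent u = Some v -> parent v = Some w -> parent w = None.
Proof.
case: (boolP (u \in Y)) => uY.
  rewrite parent_Y //; case: ifP => // _ [<-] /(parent_notin_Y (choice_notin_Y uY)).
  by case=> w_hub _; rewrite parent_Y ?w_hub ?hub_Y.
by case/(parent_notin_Y uY)=> v_hub _; rewrite parent_Y ?v_hub ?hub_Y.
Qed.

Lemma parent_edge u v : parent u = Some v -> e u v.
Proof.
case: (boolP (u \in Y)) => uY.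
  by rewrite parent_Y //; case: ifP => // _ [<-]; apply: f_choice.
case/(parent_notin_Y uY)=> _ [y [yY <- [[_ ->]|[_ ->]]]]; last by rewrite e_sym f_choice.
by case: (attachP yY).
Qed.

Lemma parent_choice_hub z : z \in hubs -> parent (f z) = Some z.
Proof.
move=> z_hub; have zY := hub_Y z_hub; have z_shared := hub_shared z_hub.
rewrite /parent (negbTE (choice_notin_Y zY)).
case: pickP => [y /andP[/andP[yY y_lonely] /eqP fyz]|_].
  by have zy := lonely_choice_inj yY y_lonely zY (esym fyz); rewrite -zy z_shared in y_lonely.
case: pickP => [z' /andP[z'_hub /eqP fz'z]|none]; last by have := none z; rewrite z_hub eqxx.
congr Some; apply/eqP/negPn/negP=> z'z.
by move/negP: (hub_partner_not_hub z_hub (hub_Y z'_hub) z'z fz'z).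
Qed.

Lemma parent_choice_lonely y : y \in Y -> y \notin shared f -> parent (f y) = Some (attach y).
Proof.
move=> yY y_lonely; rewrite /parent (negbTE (choice_notin_Y yY)).
case: pickP => [y' /andP[/andP[y'Y _] /eqP fy'y]|none].
  by rewrite (lonely_choice_inj yY y_lonely y'Y fy'y).
by have := none y; rewrite /lonely yY y_lonely eqxx.
Qed.

Lemma parent_Y_notin_Y v w : v \in Y -> parent v = Some w -> w \notin Y.
Proof. by move=> vY; rewrite parent_Y //; case: ifP => // _ [<-]; apply: choice_notin_Y. Qed.

Definition forest_vertices := [set v | (parent v != None) || [exists w, parent w == Some v]].

Lemma forest_proot_child x :
  x \in forest_vertices -> exists w, parent w = Some (proot parent x).
Proof.
rewrite /proot; case xv: (parent x) => [v|].
  by case vw: (parent v) => [w|]; [exists v | exists x].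
by rewrite inE xv => /existsP[w /eqP wx]; exists w.
Qed.

Definition child x := odflt x [pick v in Y | (f v == x) && (v \notin hubs)].

Lemma childP x : x \notin Y -> parent x != None ->
  [/\ child x \in Y, f (child x) = x & child x \notin hubs].
Proof.
move=> xY; case xw: (parent x) => [w|] // _.
have [_ [y [yY fyx y_lonely_or_hub]]] := parent_notin_Y xY xw.
have [c /and3P[cY /eqP fcx c_hub]] : exists c, [&& c \in Y, f c == x & c \notin hubs].
  case: y_lonely_or_hub => [[y_lonely _]|[y_hub _]].
    by exists y; rewrite yY fyx eqxx; apply: contra y_lonely; apply: hub_shared.
  have [_ [p [pY py fpy]]] := sharedP (hub_shared y_hub).
  by exists p; rewrite pY fpy fyx eqxx (hub_partner_not_hub y_hub pY py fpy).
rewrite /child; case: pickP => [c' /andP[-> /andP[/eqP-> ->]] //|none].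
by have := none c; rewrite cY fcx eqxx c_hub.
Qed.

Lemma component_hub u : proot parent u \in hubs ->
  comp_is_subdivided_star (parent_rel parent) (component (parent_rel parent) u) (proot parent u).
Proof.
set r := proot parent u => r_hub; have rY := hub_Y r_hub.
have child_notin_Y x : parent x = Some r -> x \notin Y.
  by move=> xr; apply/negP=> xY; have := parent_Y_notin_Y xY xr; rewrite rY.
apply: (comp_is_subdivided_star_proot parent_depth (child := child)).
- move=> x xr; have [|cY fcx c_hub] := childP (child_notin_Y _ xr); first by rewrite xr.
  by rewrite parent_Y // (negbTE c_hub) fcx.
- move=> v x xr vx; have xY := child_notin_Y _ xr.
  have [|cY fcx c_hub] := childP xY; first by rewrite xr.
  have vY : v \in Y.
    by apply: contraNT xY => vY; have [x_hub _] := parent_notin_Y vY vx; apply: hub_Y.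
  move: vx; rewrite parent_Y //; case: ifP => // v_hub [fvx].
  have [_ [y [yY fyx [[y_lonely _]|[y_hub _]]]]] := parent_notin_Y xY xr.
    have -> := lonely_choice_inj yY y_lonely vY (etrans fvx (esym fyx)).
    by rewrite (lonely_choice_inj yY y_lonely cY (etrans fcx (esym fyx))).
  apply: (hub_partner_uniq y_hub vY cY); rewrite ?fvx ?fcx //.
    by apply: contraFneq v_hub => ->.
  by apply: contraNneq c_hub => ->.
- have [_ [y [yY y_lonely ay]]] := hubP r_hub; have [_ ry _] := attachP yY; rewrite ay in ry.
  apply/card_gt1P; exists (f y), (f r).
  rewrite !inE parent_choice_lonely // parent_choice_hub // ay !eqxx; split=> //.
  by apply: contraNneq y_lonely => fyr; apply: (mem_shared yY (hub_Y r_hub) ry (esym fyr)).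
Qed.

Lemma component_X_root u : proot parent u \notin Y ->
  (exists w, parent w = Some (proot parent u)) ->
  comp_is_star (parent_rel parent) (component (parent_rel parent) u) (proot parent u).
Proof.
set r := proot parent u => rY [w0 w0r].
have r0 : parent r = None by apply: proot_None parent_depth u.
have child_in_Y w : parent w = Some r -> w \in Y.
  by move=> wr; apply: contraNT rY => wY; have [/hub_Y] := parent_notin_Y wY wr.
apply: (comp_is_star_proot parent_depth).
  move=> v w vw; apply/eqP=> wr; have wY := child_in_Y _ wr.
  have vY : v \notin Y by apply: contraTN wY => vY; apply: parent_Y_notin_Y vw.
  by have [w_hub _] := parent_notin_Y vY vw; rewrite parent_Y // w_hub in wr.
have w0Y := child_in_Y _ w0r.
move: (w0r); rewrite parent_Y //; case: ifP => // w0_hub [fw0].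
have w0_shared : w0 \in shared f.
  by apply: contraT => w0_lonely; have := parent_choice_lonely w0Y w0_lonely; rewrite fw0 r0.
have [_ [q [qY qw0 fq]]] := sharedP w0_shared.
have q_hub : q \notin hubs.
  by apply: contraT => /negbNE q_hub; have := parent_choice_hub q_hub; rewrite fq fw0 r0.
apply/card_gt1P; exists w0, q; rewrite !inE w0r parent_Y // (negbTE q_hub) fq fw0 eqxx.
by rewrite eq_sym.
Qed.

Lemma parent_subgraph : subgraph e forest_vertices (parent_rel parent).
Proof.
split; first exact: parent_rel_sym.
  by move=> x y /orP[]/eqP/parent_edge; rewrite // e_sym.
move=> x y /orP[]/eqP xy; rewrite !inE xy /=; split=> //; apply/orP; right; apply/existsP.
- by exists x; rewrite xy.
- by exists y; rewrite xy.
Qed.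

Lemma parent_covers_Y y : y \in Y -> exists z, parent_rel parent y z.
Proof.
move=> yY; exists (f y); rewrite /parent_rel.
case: (boolP (y \in hubs)) => y_hub; first by rewrite parent_choice_hub // eqxx orbT.
by rewrite parent_Y // (negbTE y_hub) eqxx.
Qed.

Lemma forest_component x : x \in forest_vertices ->
  (exists c, c \in X /\ comp_is_star (parent_rel parent) (component (parent_rel parent) x) c) \/
  (exists c, c \in Y /\
     comp_is_subdivided_star (parent_rel parent) (component (parent_rel parent) x) c).
Proof.
move=> /forest_proot_child x_child; have r0 := proot_None parent_depth x.
case: (boolP (proot parent x \in Y)) => rY.
  right; exists (proot parent x); split=> //; apply: component_hub.
  by move: r0; rewrite parent_Y //; case: ifP.
by left; exists (proot parent x); split; [apply: notin_Y_in_X | apply: component_X_root].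
Qed.

End Optimal.

End Bipartite.

Theorem mainTheorem4 (T : finType) (e : rel T) (X Y : {set T}) :
  symmetric e -> irreflexive e ->
  connected_graph e ->
  bipartition e X Y ->
  at_least_two_edges e ->
  ~ (exists c, c \in Y /\ graph_is_star_centered e c) ->
  exists (S : {set T}) (h : rel T),
    [/\ subgraph e S h,
        (forall y, y \in Y -> exists z, h y z) &
        (forall x, x \in S ->
           (exists c, c \in X /\ comp_is_star h (component h x) c) \/
           (exists c, c \in Y /\ comp_is_subdivided_star h (component h x) c))].
Proof.
move=> e_sym e_irr e_conn e_bip _ not_Ystar.
have [f /neighbour_choiceP f_choice f_opt] :=
  exists_optimal_choice e_sym e_irr e_conn e_bip not_Ystar.
exists (forest_vertices e Y f), (parent_rel (parent e Y f)); split.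
- exact (parent_subgraph e_sym e_irr e_conn e_bip not_Ystar f_choice f_opt).
- exact (parent_covers_Y e_sym e_irr e_conn e_bip not_Ystar f_choice f_opt).
- exact (forest_component e_sym e_irr e_conn e_bip not_Ystar f_choice f_opt).
Qed.
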